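(* A tree $T$ is a DPDP-tree (a tree that is a DPDP-graph) if and only if $T$ is a spanning supergraph of a 2-subdivision graph $S_2(F)$ (for some function $\alpha$) of a forest $F$ that has neither isolated vertices nor good subgraphs.
   Context: Graphs are finite. A leaf is a vertex of degree one. A set $D\subseteq V(G)$ is dominating if every vertex outside $D$ has a neighbor in $D$; $P$ is paired-dominating if it is dominating and the subgraph induced by $P$ has a perfect matching. A DPDP-graph is a graph $G$ admitting disjoint sets $D,P$ with $V(G)=D\cup P$, $D$ dominating and $P$ paired-dominating. A spanning supergraph of $R$ is a graph with the same vertex set containing all edges of $R$. 2-subdivision graph: for a graph $H$ with no isolated vertex, set of leaves $L_H$, and $\alpha:L_H\to\mathbb{N}=\{1,2,\dots\}$, $S_2(H)$ has vertex set $(V_H\setminus L_H)\cup\{(v,i): v\in L_H, 1\le i\le \alpha(v)\}$ together with two new vertices $u_e,v_e$ for each edge $e=uv$ of $H$. Its edges are: $u_ev_e$ for each edge $e=uv$; for $v\in V_H\setminus L_H$, $vv_e$ for each edge $e$ at $v$; for $v\in L_H$ with incident edge $e$, the edges $v_e(v,i)$, $1\le i\le\alpha(v)$. Good subgraph: Let $Q$ be a subgraph of $H$ without isolated vertices, and $E_Q^-$ the set of edges of $H$ not in $Q$ incident with at least one vertex of $Q$. $Q$ is a good subgraph of $H$ if there exist a set of edges $E$ with $E_Q^-\subseteq E\subseteq E_H\setminus E_Q$ and an orientation $A_E$ of the edges of $E$ (where $d^+(x)$, $d^-(x)$ denote the numbers of arcs of $A_E$ leaving, resp. entering $x$, and $d_H(x)$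 is the degree in $H$) such that the arcs of $A_E$ form a family $\mathcal P=\{P_x: x\in V_Q\}$ of oriented paths indexed by the vertices of $Q$ with: (i) every vertex $v$ of $Q$ is the initial vertex of exactly one path of $\mathcal P$, and $d^+(v)=1$, $d^-(v)=d_H(v)-d_Q(v)-1$; (ii) if $x$ is an inner vertex of a path of $\mathcal P$, then $d^+(x)=1$ and $d^-(x)=d_H(x)-1$; (iii) if $x$ is an end vertex of a path of $\mathcal P$, then $d^-(x)<d_H(x)$. *)

From mathcomp Require Import all_boot.
Set Implicit Arguments. Unset Strict Implicit. Unset Printing Implicit Defensive.

Section Graphs.
Variable V : finType.
Implicit Types (e : rel V) (A : {set V}).

Definition simple_graph e := symmetric e /\ irreflexive e.

Definition deg e (x : V) : nat := #|[set y | e x y]|.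
Definition indeg e (x : V) : nat := #|[set y | e y x]|.

Definition is_leaf e (x : V) := deg e x = 1.
Definition no_isolated e := forall x : V, 0 < deg e x.

Definition acyclic e := forall p : seq V, 2 < size p -> uniq p -> ~~ cycle e p.
Definition connected e := forall x y : V, connect e x y.

Definition is_forest e := simple_graph e /\ acyclic e.
Definition is_tree e := simple_graph e /\ 0 < #|V| /\ connected e /\ acyclic e.

Definition dominating e A := forall x, x \notin A -> exists2 y, y \in A & e x y.

Definition perfect_matching_of e A (M : {set {set V}}) :=
  (forall m, m \in M -> exists x y, [/\ x \in A, y \in A, e x y & m = [set x; y]]) /\
  (forall x, x \in A -> exists! m, m \in M /\ x \in m).

Definition paired_dominating e A :=
  dominating e A /\ exists M, perfect_matching_of e A M.

Definition DPDP e :=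
  exists D P : {set V}, [/\ [disjoint D & P], D :|: P = setT,
                           dominating e D & paired_dominating e P].

(* A subgraph Q without isolated vertices is given by its (symmetric) edge
   relation q; its vertex set is the set of endpoints of its edges. *)
Definition vQ (q : rel V) (x : V) : bool := [exists y, q x y].

Definition arcs_of (x : V) (p : seq V) : seq (V * V) := zip (x :: p) p.

Definition good_subgraph (e q : rel V) :=
  [/\ (forall x y, q x y -> e x y), symmetric q, (exists x y, q x y) &
  (* a : the orientation A_E; E is the set of underlying edges of a *)
  exists (a : rel V) (P : V -> seq V),
  [/\ (* E subset of E_H \ E_Q, and a is an orientation *)
      (forall x y, a x y -> e x y && ~~ q x y) /\
      (forall x y, a x y -> ~~ a y x),
      (* E_Q^- subset of E *)
      (forall x y, e x y -> ~~ q x y -> vQ q x || vQ q y -> a x y || a y x),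
      (forall x, vQ q x -> [/\ P x != [::], path a x (P x) & uniq (x :: P x)]),
      (forall u w, a u w ->
         #|[set x | vQ q x && ((u, w) \in arcs_of x (P x))]| = 1) &
      [/\
      (forall v, vQ q v -> deg a v = 1 /\ indeg a v + deg q v + 1 = deg e v),
      (forall x y, vQ q x -> y \in P x -> y != last x (P x) ->
         deg a y = 1 /\ indeg a y + 1 = deg e y) &
      (forall x, vQ q x -> indeg a (last x (P x)) < deg e (last x (P x)))]]].

Definition has_good_subgraph e := exists q : rel V, good_subgraph e q.

End Graphs.

(* vertices: original non-leaf vertices, leaf copies (v,i), and for each edge
   e = uv the vertex u_e, represented by the dart (u,v). *)
Inductive s2v (W : Type) : Type :=
| S2Orig of W
| S2Copy of W & nat
| S2Dart of W & W.

Section S2.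
Variables (W : finType) (e : rel W) (alpha : W -> nat).

Definition S2vert (z : s2v W) : Prop :=
  match z with
  | S2Orig v => ~ is_leaf e v
  | S2Copy v i => is_leaf e v /\ 1 <= i <= alpha v
  | S2Dart u v => e u v
  end.

(* one orientation of each edge type *)
Definition S2edge0 (z z' : s2v W) : Prop :=
  match z, z' with
  | S2Dart u v, S2Dart v' u' => e u v /\ u' = u /\ v' = v
  | S2Orig v, S2Dart v' w => ~ is_leaf e v /\ e v w /\ v' = v
  | S2Copy v i, S2Dart v' w =>
      is_leaf e v /\ 1 <= i <= alpha v /\ e v w /\ v' = v
  | _, _ => False
  end.

Definition S2adj (z z' : s2v W) : Prop := S2edge0 z z' \/ S2edge0 z' z.
End S2.

Definition spanning_supergraph (V : finType) (t : rel V) (U : Type)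
  (vert : U -> Prop) (adj : U -> U -> Prop) (f : V -> U) :=
  [/\ injective f, (forall z, vert z <-> exists a, f a = z) &
      (forall a b, adj (f a) (f b) -> t a b)].

From HB Require Import structures.
From mathcomp Require Import all_boot zify.
From Stdlib Require Import Classical.

(* A DPDP partition of a tree T amounts to a set P, perfectly matched by an involution m,
   whose complement is dominating too. Anchor every x in P at a neighbour g x outside P,
   anchoring as many vertices as possible. Contracting the stars around the anchors gives a
   forest F with one edge g x -- g (m x) for each pair {x, m x}, and T spans S_2(F): x and m x
   are the subdivision vertices of that edge, the anchors used at least twice are the inner
   vertices and the other vertices outside P are leaf copies. A good subgraph of F, with its
   paths, allows a swap that strictly shrinks P; so for |P| minimal, F has no good subgraph.
   Conversely, in a spanning supergraph of S_2(F) the subdivision vertices form a suitable P,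
   matched along the subdivided edges. *)

Set Implicit Arguments. Unset Strict Implicit. Unset Printing Implicit Defensive.

Section Pairing.
Variables (V : finType) (t : rel V).
Hypothesis tS : simple_graph t.

Definition dp_pairing (P : {set V}) (m : V -> V) :=
  [/\ dominating t (~: P), dominating t P &
      forall x, x \in P -> [/\ m x \in P, t x (m x) & m (m x) = x]].

Lemma perfect_matching_partner A M x : perfect_matching_of t A M -> x \in A ->
  exists y, [/\ y \in A, t x y, [set x; y] \in M &
                forall y', [set x; y'] \in M -> y' = y].
Proof.
case: tS => tsym tirr [blocks cover] xA.
have [b [[bM xb] b_uniq]] := cover x xA.
have [a [c [aA cA ac bE]]] := blocks b bM.
have other y : x != y -> [set x; y] = b -> forall y', [set x; y'] \in M -> y' = y.
  move=> xy Eb y' My'; have := b_uniq _ (conj My' (set21 _ _)); rewrite -Eb => E.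
  have : y \in [set x; y'] by rewrite -E set22.
  by rewrite !inE => /orP[/eqP yx|/eqP//]; move: xy; rewrite yx eqxx.
have nac : a != c by apply: contraTneq ac => ->; rewrite tirr.
move: xb other; rewrite bE !inE => /orP[]/eqP-> other.
  by exists c; split; rewrite -?bE //; apply: other.
have bE' : [set c; a] = b by rewrite bE setUC.
exists a; split=> //; [by rewrite tsym | by rewrite bE' |].
by apply: other; rewrite 1?eq_sym // setUC.
Qed.

Lemma DPDP_pairingP : DPDP t <-> exists P m, dp_pairing P m.
Proof.
case: (tS) => tsym tirr; split.
  case=> D [P [disDP coverDP domD [domP [M HM]]]].
  have DE : D = ~: P.
    apply/setP=> x; rewrite inE; apply/idP/idP => [xD|xP].
      by rewrite (disjointFr disDP xD).
    by move/setP/(_ x): coverDP; rewrite !inE (negbTE xP) orbF.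
  subst D.
  pose m x := odflt x [pick y | (y \in P) && ([set x; y] \in M)].
  have mP x : x \in P -> [/\ m x \in P, t x (m x), [set x; m x] \in M &
                            forall y', [set x; y'] \in M -> y' = m x].
    move=> xP; have [y [yP xy xyM y_uniq]] := perfect_matching_partner HM xP.
    rewrite /m; case: pickP => [y' /andP[_ /y_uniq ->] //|/(_ y)].
    by rewrite yP xyM.
  exists P, m; split=> // x xP; have [mxP xmx _ _] := mP x xP; split=> //.
  have [_ _ _ partner_uniq] := mP _ mxP.
  by apply/esym/partner_uniq; rewrite setUC; have [] := mP x xP.
case=> P [m [domD domP mP]].
exists (~: P), P; split=> //; first by rewrite disjoints_subset.
  by rewrite setUC setUCr.
split=> //; exists [set [set x; m x] | x in P]; split.
  by move=> _ /imsetP[x xP ->]; have [mxP xmx _] := mP x xP; exists x, (m x).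
move=> x xP; exists [set x; m x]; split; first by split; [apply: imset_f | rewrite set21].
move=> _ [/imsetP[y yP ->]]; rewrite !inE => /orP[/eqP->//|/eqP->].
by have [_ _ ->] := mP y yP; rewrite setUC.
Qed.

End Pairing.

Section S2vertexEqType.
Variable W : eqType.

Definition s2v_code (z : s2v W) : W + W * nat + W * W :=
  match z with
  | S2Orig a => inl (inl a)
  | S2Copy a i => inl (inr (a, i))
  | S2Dart a b => inr (a, b)
  end.

Definition s2v_decode (c : W + W * nat + W * W) : s2v W :=
  match c with
  | inl (inl a) => S2Orig a
  | inl (inr (a, i)) => S2Copy a i
  | inr (a, b) => S2Dart a b
  end.

Lemma s2v_codeK : cancel s2v_code s2v_decode. Proof. by case. Qed.

HB.instance Definition _ := Equality.copy (s2v W) (can_type s2v_codeK).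

End S2vertexEqType.

Definition is_dart (W : Type) (z : s2v W) := if z is S2Dart _ _ then true else false.

Definition dart_rev (W : Type) (z : s2v W) :=
  if z is S2Dart a b then S2Dart b a else z.

Lemma deg_gt0_neighbor (V : finType) (e : rel V) x : 0 < deg e x -> exists y, e x y.
Proof. by rewrite /deg card_gt0 => /set0Pn[y]; rewrite inE; exists y. Qed.

Section Spanning.
Variables (V W : finType) (t : rel V) (eF : rel W) (alpha : W -> nat) (f : V -> s2v W).
Hypothesis span : spanning_supergraph t (S2vert eF alpha) (S2adj eF alpha) f.

Lemma spanning_preim z : S2vert eF alpha z -> exists v, f v = z.
Proof. by case: span => _ f_onto _ /f_onto. Qed.

Lemma spanning_vert v : S2vert eF alpha (f v).
Proof. by case: span => _ f_onto _; apply/f_onto; exists v. Qed.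

Lemma spanning_edge u v : S2edge0 eF alpha (f u) (f v) -> t u v.
Proof. by case: span => _ _ f_adj uv; apply: f_adj; left. Qed.

Definition darts := [set v | is_dart (f v)].

Hypotheses (tsym : symmetric t) (esym : symmetric eF) (noiso : no_isolated eF).
Hypothesis alpha_pos : forall w, is_leaf eF w -> 0 < alpha w.

Lemma darts_dominating_compl : dominating t (~: darts).
Proof.
move=> x; rewrite !inE negbK; case Ex: (f x) => [a|a i|a b] //= _.
have ab : eF a b by have := spanning_vert x; rewrite Ex.
case: (deg eF a =P 1) => la.
  have [u Eu] : exists u, f u = S2Copy a 1 by apply: spanning_preim; rewrite /= alpha_pos.
  exists u; first by rewrite !inE Eu.
  by rewrite tsym; apply: spanning_edge; rewrite Eu Ex /= alpha_pos.
have [u Eu] : exists u, f u = S2Orig a by apply: spanning_preim.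
exists u; first by rewrite !inE Eu.
by rewrite tsym; apply: spanning_edge; rewrite Eu Ex.
Qed.

Lemma darts_dominating : dominating t darts.
Proof.
move=> x; rewrite !inE; case Ex: (f x) => [a|a i|a b] //= _.
  have la : ~ is_leaf eF a by have := spanning_vert x; rewrite Ex.
  have [b ab] := deg_gt0_neighbor (noiso a).
  have [u Eu] : exists u, f u = S2Dart a b by apply: spanning_preim.
  by exists u; [rewrite inE Eu | apply: spanning_edge; rewrite Ex Eu].
have [la ia] : is_leaf eF a /\ 1 <= i <= alpha a by have := spanning_vert x; rewrite Ex.
have [b ab] : exists b, eF a b by apply: deg_gt0_neighbor; rewrite la.
have [u Eu] : exists u, f u = S2Dart a b by apply: spanning_preim.
by exists u; [rewrite inE Eu | apply: spanning_edge; rewrite Ex Eu].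
Qed.

Definition dart_partner v := odflt v [pick u | f u == dart_rev (f v)].

Lemma dart_partnerE x a b : f x = S2Dart a b -> f (dart_partner x) = S2Dart b a.
Proof.
move=> Ex; rewrite /dart_partner; case: pickP => [u /eqP -> | no_u]; first by rewrite Ex.
have [u Eu] : exists u, f u = S2Dart b a.
  by apply: spanning_preim; rewrite /= esym; have := spanning_vert x; rewrite Ex.
by have := no_u u; rewrite Eu Ex eqxx.
Qed.

Lemma darts_pairing : dp_pairing t darts dart_partner.
Proof.
split; [exact: darts_dominating_compl | exact: darts_dominating |].
move=> x; rewrite inE; case Ex: (f x) => [||a b] // _.
have Em := dart_partnerE Ex; have [finj _ _] := span.
split; first by rewrite inE Em.
  by apply: spanning_edge; rewrite Ex Em /=; split=> //; have := spanning_vert x; rewrite Ex.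
by apply: finj; rewrite (dart_partnerE Em).
Qed.

End Spanning.

Lemma mem_arcs_of (T : finType) (x : T) p u w : uniq (x :: p) ->
  (u, w) \in arcs_of x p -> [/\ u \in x :: p, u != last x p & w \in p].
Proof.
rewrite /arcs_of; elim: p x => [|y p IH] x //=.
rewrite in_cons => /andP[xn up] /orP[/eqP[-> ->]|H].
  split; rewrite ?in_cons ?eqxx //.
  by apply: contraNneq xn => ->; rewrite -in_cons mem_last.
have [H1 H2 H3] := IH y up H.
by split=> //; rewrite in_cons ?H1 ?H3 ?orbT.
Qed.

Lemma path_has_pred (T : eqType) (e : rel T) x p y :
  path e x p -> y \in p -> exists z, e z y.
Proof.
elim: p x => [|z p IH] x //= /andP[xz pz].
by rewrite in_cons => /orP[/eqP->|/(IH _ pz)//]; exists x.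
Qed.

Lemma deg_eq1_uniq (T : finType) (a : rel T) z y1 y2 :
  deg a z = 1 -> a z y1 -> a z y2 -> y1 = y2.
Proof.
rewrite /deg => /eqP/cards1P[x Ex] h1 h2.
have : y1 \in [set y | a z y] by rewrite inE.
have : y2 \in [set y | a z y] by rewrite inE.
by rewrite Ex !inE => /eqP-> /eqP->.
Qed.

Lemma indeg_lt_deg_free (T : finType) (e a : rel T) z :
  (forall y, a y z -> e z y) -> indeg a z < deg e z -> exists y, e z y && ~~ a y z.
Proof.
move=> sub lt.
have : ~~ ([set y | e z y] \subset [set y | a y z]).
  apply/negP=> /subset_leq_card; rewrite -/(deg e z) -/(indeg a z); lia.
by case/subsetPn=> y; rewrite !inE => h1 h2; exists y; rewrite h1.
Qed.

Lemma disjoint3_cover (T : finType) (O I Q E : {set T}) :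
  O \subset E -> I \subset E -> Q \subset E ->
  [disjoint O & I] -> [disjoint O & Q] -> [disjoint I & Q] ->
  #|O| + #|I| + #|Q| = #|E| -> O :|: I :|: Q = E.
Proof.
move=> sO sI sQ dOI dOQ dIQ card; apply/eqP; rewrite eqEcard !subUset sO sI sQ /=.
have dOIQ : (O :|: I) :&: Q = set0 by rewrite setIUl !disjoint_setI0 ?setU0.
by rewrite cardsU dOIQ cardsU disjoint_setI0 // !cards0 !subn0 card.
Qed.

Section Reduction.
Variables (V W : finType) (t : rel V) (eF : rel W) (alpha : W -> nat) (f : V -> s2v W).
Variables (q a : rel W) (pth : W -> seq W).
Hypotheses (tsym : symmetric t) (esym : symmetric eF) (noiso : no_isolated eF).
Hypothesis alpha_pos : forall w, is_leaf eF w -> 0 < alpha w.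
Hypothesis span : spanning_supergraph t (S2vert eF alpha) (S2adj eF alpha) f.
Hypotheses (q_sub : forall x y, q x y -> eF x y) (qsym : symmetric q).
Hypothesis a_sub : forall x y, a x y -> eF x y && ~~ q x y.
Hypothesis a_anti : forall x y, a x y -> ~~ a y x.
Hypothesis pth_path :
  forall x, vQ q x -> [/\ pth x != [::], path a x (pth x) & uniq (x :: pth x)].
Hypothesis pth_arcs :
  forall u w, a u w -> #|[set x | vQ q x && ((u, w) \in arcs_of x (pth x))]| = 1.
Hypothesis deg_Q : forall v, vQ q v -> deg a v = 1 /\ indeg a v + deg q v + 1 = deg eF v.
Hypothesis deg_inner : forall x y, vQ q x -> y \in pth x -> y != last x (pth x) ->
  deg a y = 1 /\ indeg a y + 1 = deg eF y.
Hypothesis deg_end : forall x, vQ q x -> indeg a (last x (pth x)) < deg eF (last x (pth x)).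

Definition inner_vertex w := [exists x, [&& vQ q x, w \in pth x & w != last x (pth x)]].

(* These are exactly the tails of the arcs. *)
Definition saturated w := vQ q w || inner_vertex w.

Lemma arc_edge x y : a x y -> eF x y. Proof. by case/a_sub/andP. Qed.

Lemma arc_notQ x y : a x y -> ~~ q x y. Proof. by case/a_sub/andP. Qed.

Lemma vQ_edge x y : q x y -> vQ q x. Proof. by move=> xy; apply/existsP; exists y. Qed.

Lemma arc_on_path u w : a u w ->
  exists x, [/\ vQ q x, u \in x :: pth x, u != last x (pth x) & w \in pth x].
Proof.
move=> uw; have /eqP/cards1P[x Ex] := pth_arcs uw.
have : x \in [set x | vQ q x && ((u, w) \in arcs_of x (pth x))] by rewrite Ex set11.
rewrite inE => /andP[vx H]; have [_ _ ux] := pth_path vx.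
by have [] := mem_arcs_of ux H; exists x.
Qed.

Lemma saturated_arc_tail u w : a u w -> saturated u.
Proof.
case/arc_on_path=> x [vx]; rewrite in_cons /saturated => /orP[/eqP->|up] ul _.
  by rewrite vx.
by apply/orP; right; apply/existsP; exists x; rewrite vx up ul.
Qed.

Lemma arc_into_path x y : vQ q x -> y \in pth x -> exists z, a z y.
Proof. by case/pth_path=> _ px _; apply: path_has_pred px. Qed.

Lemma saturated_outdeg u : saturated u -> deg a u = 1.
Proof.
case/orP=> [/deg_Q[]//|/existsP[x /and3P[vx up ul]]].
by have [] := deg_inner vx up ul.
Qed.

Lemma saturated_edge u y : saturated u -> eF u y -> [|| a u y, a y u | q u y].
Proof.
move=> Mu uy.
have sO : [set z | a u z] \subset [set z | eF u z].
  by apply/subsetP=> z; rewrite !inE => /arc_edge.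
have sI : [set z | a z u] \subset [set z | eF u z].
  by apply/subsetP=> z; rewrite !inE esym => /arc_edge.
have sQ : [set z | q u z] \subset [set z | eF u z].
  by apply/subsetP=> z; rewrite !inE => /q_sub.
have dOI : [disjoint [set z | a u z] & [set z | a z u]].
  by rewrite disjoints_subset; apply/subsetP=> z; rewrite !inE => /a_anti.
have dOQ : [disjoint [set z | a u z] & [set z | q u z]].
  by rewrite disjoints_subset; apply/subsetP=> z; rewrite !inE => /arc_notQ.
have dIQ : [disjoint [set z | a z u] & [set z | q u z]].
  by rewrite disjoints_subset; apply/subsetP=> z; rewrite !inE qsym => /arc_notQ.
suff /(disjoint3_cover sO sI sQ dOI dOQ dIQ)/setP/(_ y) :
    #|[set z | a u z]| + #|[set z | a z u]| + #|[set z | q u z]| = #|[set z | eF u z]|.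
  by rewrite !inE uy -orbA.
rewrite -/(deg a u) -/(indeg a u) -/(deg q u) -/(deg eF u) saturated_outdeg //.
case: (boolP (vQ q u)) => [/deg_Q[_ <-]|nvu]; first by rewrite -addnA addnC.
case/orP: Mu nvu => [->//|/existsP[x /and3P[vx up ul]]] nvu.
have [_ <-] := deg_inner vx up ul.
suff -> : deg q u = 0 by rewrite addn0 addnC.
by apply/eqP; rewrite cards_eq0; apply/eqP/setP=> z; rewrite !inE; apply: contraNF nvu => /vQ_edge.
Qed.

Lemma saturated_not_leaf u : saturated u -> ~ is_leaf eF u.
Proof.
rewrite /is_leaf => /orP[vu | /existsP[x /and3P[vx up ul]]].
  have [_ <-] := deg_Q vu; case/existsP: vu => y quy.
  suff : 0 < deg q u by lia.
  by rewrite /deg card_gt0; apply/set0Pn; exists y; rewrite inE.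
have [_ <-] := deg_inner vx up ul; have [z zu] := arc_into_path vx up.
suff : 0 < indeg a u by lia.
by rewrite /indeg card_gt0; apply/set0Pn; exists z; rewrite inE.
Qed.

Lemma unsaturated_free_edge z : ~~ saturated z -> exists y, eF z y && ~~ a y z.
Proof.
move=> Mz; case: (pickP (a^~ z)) => [y yz|no_arc]; last first.
  by have [y zy] := deg_gt0_neighbor (noiso z); exists y; rewrite zy no_arc.
have [x [vx _ _ zp]] := arc_on_path yz.
have -> : z = last x (pth x).
  apply/eqP; apply: contraNT Mz => zl.
  by apply/orP; right; apply/existsP; exists x; rewrite vx zp zl.
by apply: indeg_lt_deg_free (deg_end vx) => y' /arc_edge; rewrite esym.
Qed.

Lemma leaf_edge_free v w : is_leaf eF v -> eF v w -> ~~ a w v && ~~ q v w.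
Proof.
move=> lv vw; apply/andP; split; last first.
  by apply: contraPN lv => /vQ_edge vQv; apply: saturated_not_leaf; rewrite /saturated vQv.
apply: contraPN lv => wv; have [x [vx _ _ vp]] := arc_on_path wv.
case: (eqVneq v (last x (pth x))) => [vl | vl] lv.
  have := deg_end vx; rewrite -vl lv ltnS leqn0 cards_eq0 => /eqP/setP/(_ w).
  by rewrite !inE wv.
apply: (saturated_not_leaf _ lv).
by apply/orP; right; apply/existsP; exists x; rewrite vx vp vl.
Qed.

Lemma saturated_out_arc u : saturated u -> exists y, a u y.
Proof. by move/saturated_outdeg=> du; apply: deg_gt0_neighbor; rewrite du. Qed.

Definition reduced_set : {set V} := [set v |
  match f v with
  | S2Orig w => saturated w
  | S2Copy _ _ => false
  | S2Dart u w => ~~ a w u && ~~ q u w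
  end].

Definition reduced_match v u :=
  match f v, f u with
  | S2Dart x y, S2Orig z | S2Orig z, S2Dart x y => a x y && (z == x)
  | S2Dart x y, S2Dart x' y' => [&& x' == y, y' == x, ~~ a x y, ~~ a y x & ~~ q x y]
  | _, _ => false
  end.

Definition reduced_partner v := odflt v [pick u | reduced_match v u].

Lemma dart_edge v x y : f v = S2Dart x y -> eF x y.
Proof. by move=> Ev; have := spanning_vert span v; rewrite Ev. Qed.

Lemma reduced_match_ex v : v \in reduced_set -> exists u, reduced_match v u.
Proof.
rewrite inE /reduced_match; case Ev: (f v) => [w|w i|x y] //.
  move=> Mw; have [y wy] := saturated_out_arc Mw.
  have [u Eu] : exists u, f u = S2Dart w y by apply: (spanning_preim span); apply: arc_edge.
  by exists u; rewrite Eu wy eqxx.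
case/andP=> nyx nqxy; case xy: (a x y).
  have [u Eu] : exists u, f u = S2Orig x.
    by apply: (spanning_preim span); apply: saturated_not_leaf; apply: saturated_arc_tail xy.
  by exists u; rewrite Eu eqxx.
have [u Eu] : exists u, f u = S2Dart y x.
  by apply: (spanning_preim span); rewrite /= esym; apply: dart_edge Ev.
by exists u; rewrite Eu !eqxx nyx nqxy.
Qed.

Lemma reduced_match_sym v u : reduced_match v u -> reduced_match u v.
Proof.
rewrite /reduced_match; case: (f v) => [w|w i|x y]; case: (f u) => [w'|w' i'|x' y'] //=.
by case/and5P=> /eqP-> /eqP-> xy yx nq; rewrite !eqxx xy yx qsym nq.
Qed.

Lemma reduced_match_uniq v u1 u2 : reduced_match v u1 -> reduced_match v u2 -> u1 = u2.
Proof.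
have [finj _ _] := span.
rewrite /reduced_match; case Ev: (f v) => [w|w i|x y];
  case E1: (f u1) => [w1|w1 i1|x1 y1]; case E2: (f u2) => [w2|w2 i2|x2 y2] //=.
- case/andP=> a1 /eqP e1; case/andP=> a2 /eqP e2; subst x1 x2.
  have := deg_eq1_uniq (saturated_outdeg (saturated_arc_tail a1)) a1 a2 => ey; subst y2.
  by apply: finj; rewrite E1 E2.
- by case/andP=> _ /eqP e1; case/andP=> _ /eqP e2; apply: finj; rewrite E1 E2 e1 e2.
- by case/andP=> -> _; case/and5P=> _ _ /negP.
- by case/and5P=> _ _ /negP nb _ _ /andP[/nb].
- case/and5P=> /eqP ? /eqP ? _ _ _; case/and5P=> /eqP ? /eqP ? _ _ _; subst.
  by apply: finj; rewrite E1 E2.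
Qed.

Lemma reduced_match_mem v u : v \in reduced_set -> reduced_match v u -> u \in reduced_set.
Proof.
rewrite !inE /reduced_match; case: (f v) => [w|w i|x y]; case: (f u) => [w'|w' i'|x' y'] //=.
- by move=> _ /andP[wy _]; rewrite (a_anti wy) (arc_notQ wy).
- by move=> _ /andP[xy /eqP->]; apply: saturated_arc_tail xy.
- by move=> _ /and5P[/eqP-> /eqP-> xy _ nq]; rewrite xy qsym nq.
Qed.

Lemma reduced_match_edge v u : reduced_match v u -> t v u.
Proof.
rewrite /reduced_match; case Ev: (f v) => [w|w i|x y];
  case Eu: (f u) => [w'|w' i'|x' y'] //=.
- case/andP=> wy /eqP ?; subst w; apply: (spanning_edge span); rewrite Ev Eu /=.
  by split; [apply: saturated_not_leaf; apply: saturated_arc_tail wy | split; [apply: arc_edge|]].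
- case/andP=> xy /eqP ?; subst w'; rewrite tsym; apply: (spanning_edge span); rewrite Ev Eu /=.
  by split; [apply: saturated_not_leaf; apply: saturated_arc_tail xy | split; [apply: arc_edge|]].
- case/and5P=> /eqP ? /eqP ? _ _ _; subst x' y'; apply: (spanning_edge span); rewrite Ev Eu /=.
  by split; [apply: dart_edge Ev|].
Qed.

Lemma reduced_partner_match v : v \in reduced_set -> reduced_match v (reduced_partner v).
Proof.
move=> vP; rewrite /reduced_partner; case: pickP => [u //|no_match].
by have [u] := reduced_match_ex vP; rewrite no_match.
Qed.

Lemma reduced_dominating_compl : dominating t (~: reduced_set).
Proof.
have pre := spanning_preim span; have edge := @spanning_edge _ _ _ _ _ _ span.
move=> x; rewrite !inE negbK; case Ex: (f x) => [w|w i|u w] //.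
  move=> Mw; have nlw := saturated_not_leaf Mw.
  case/orP: (Mw) => [/existsP[y wy]|/existsP[x' /and3P[vx wp wl]]].
    have [u Eu] : exists u, f u = S2Dart w y by apply: pre; apply: q_sub.
    exists u; first by rewrite !inE Eu wy andbF.
    by apply: edge; rewrite Ex Eu /=; split; [|split; [apply: q_sub|]].
  have [z zw] := arc_into_path vx wp.
  have [u Eu] : exists u, f u = S2Dart w z by apply: pre; rewrite /= esym; apply: arc_edge.
  exists u; first by rewrite !inE Eu zw.
  by apply: edge; rewrite Ex Eu /=; split; [|split; [rewrite esym; apply: arc_edge|]].
case/andP=> nwu nquw; have uw := dart_edge Ex.
case: (boolP (saturated u)) => Mu.
  have := saturated_edge Mu uw; rewrite (negbTE nwu) (negbTE nquw) !orbF /= => auw.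
  have [u' Eu'] : exists u', f u' = S2Dart w u by apply: pre; rewrite /= esym.
  exists u'; first by rewrite !inE Eu' auw.
  by apply: edge; rewrite Ex Eu'.
case: (deg eF u =P 1) => lu.
  have [u' Eu'] : exists u', f u' = S2Copy u 1 by apply: pre; rewrite /= alpha_pos.
  exists u'; first by rewrite !inE Eu'.
  by rewrite tsym; apply: edge; rewrite Ex Eu' /= alpha_pos.
have [u' Eu'] : exists u', f u' = S2Orig u by apply: pre.
exists u'; first by rewrite !inE Eu'.
by rewrite tsym; apply: edge; rewrite Ex Eu'.
Qed.

Lemma reduced_dominating : dominating t reduced_set.
Proof.
have pre := spanning_preim span; have edge := @spanning_edge _ _ _ _ _ _ span.
move=> x; rewrite !inE; case Ex: (f x) => [w|w i|u w].
- move=> Mw; have [y /andP[wy nyw]] := unsaturated_free_edge Mw.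
  have [u Eu] : exists u, f u = S2Dart w y by apply: pre.
  exists u.
    by rewrite !inE Eu nyw; apply: contra Mw => /vQ_edge vw; rewrite /saturated vw.
  by apply: edge; rewrite Ex Eu /=; split=> //; have := spanning_vert span x; rewrite Ex.
- move=> _; have [lw wi] : is_leaf eF w /\ 1 <= i <= alpha w.
    by have := spanning_vert span x; rewrite Ex.
  have [y wy] : exists y, eF w y by apply: deg_gt0_neighbor; rewrite lw.
  have [u Eu] : exists u, f u = S2Dart w y by apply: pre.
  exists u; first by rewrite !inE Eu; apply: leaf_edge_free.
  by apply: edge; rewrite Ex Eu.
- rewrite negb_and !negbK => /orP[wu|quw].
    have [u' Eu'] : exists u', f u' = S2Dart w u by apply: pre; apply: arc_edge.
    exists u'; first by rewrite !inE Eu' (a_anti wu) (arc_notQ wu).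
    by apply: edge; rewrite Ex Eu' /=; split; [apply: dart_edge Ex|].
  have Mu : saturated u by rewrite /saturated (vQ_edge quw).
  have [u' Eu'] : exists u', f u' = S2Orig u by apply: pre; apply: saturated_not_leaf.
  exists u'; first by rewrite !inE Eu'.
  rewrite tsym; apply: edge; rewrite Ex Eu' /=.
  by split; [apply: saturated_not_leaf | split; [apply: dart_edge Ex|]].
Qed.

Lemma reduced_pairing : dp_pairing t reduced_set reduced_partner.
Proof.
split; [exact: reduced_dominating_compl | exact: reduced_dominating |].
move=> x xP; have xm := reduced_partner_match xP; have mP := reduced_match_mem xP xm.
split=> //; first exact: reduced_match_edge.
exact: reduced_match_uniq (reduced_partner_match mP) (reduced_match_sym xm).
Qed.

Definition out_dart v u :=
  match f v, f u with S2Orig w, S2Dart y w' => (w' == w) && a w y | _, _ => false end.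

(* Each saturated vertex w entering the set is charged to the dart y_e of its out-arc
   e = w -> y, which leaves the set; the darts of the edges of Q leave it uncharged. *)
Lemma reduced_card_lt x0 y0 : q x0 y0 -> #|reduced_set| < #|darts f|.
Proof.
move=> q0; have [finj _ _] := span; have pre := spanning_preim span.
pose N := reduced_set :\: darts f; pose L := darts f :\: reduced_set.
suff NL : #|N| < #|L|.
  have := cardsID (darts f) reduced_set; have := cardsID reduced_set (darts f).
  by rewrite setIC -/N -/L; lia.
have Nspec v : v \in N -> exists2 w, f v = S2Orig w & saturated w.
  by rewrite !inE; case: (f v) => [w|w i|x y] //= Mw; exists w.
pose h v := odflt v [pick u | out_dart v u].
have hN v : v \in N -> out_dart v (h v).
  move=> /Nspec[w Ev Mw]; rewrite /h; case: pickP => [//|none].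
  have [y wy] := saturated_out_arc Mw.
  have [u Eu] : exists u, f u = S2Dart y w by apply: pre; rewrite /= esym; apply: arc_edge.
  by have := none u; rewrite /out_dart Ev Eu eqxx wy.
have h_inj : {in N &, injective h}.
  move=> v1 v2 /[dup] v1N /Nspec[w1 E1 _] /[dup] v2N /Nspec[w2 E2 _] E.
  have := hN v1 v1N; have := hN v2 v2N; rewrite -E /out_dart E1 E2.
  case: (f (h v1)) => [||y w'] //= /andP[/eqP e2 _] /andP[/eqP e1 _].
  by apply: finj; rewrite E1 E2 -e1 -e2.
have hL v : v \in N -> h v \in L.
  move=> /[dup] vN /Nspec[w Ev _]; have := hN v vN; rewrite /out_dart Ev !inE.
  by case: (f (h v)) => [||y w'] //= /andP[/eqP -> ->].
have [u0 Eu0] : exists u, f u = S2Dart x0 y0 by apply: pre; apply: q_sub.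
rewrite -(card_in_imset h_inj); apply: proper_card; apply/properP; split.
  by apply/subsetP=> _ /imsetP[v vN ->]; apply: hL.
exists u0; first by rewrite !inE Eu0 q0 andbF.
apply/imsetP=> -[v /[dup] vN /Nspec[w Ev _] E]; have := hN v vN.
rewrite -E /out_dart Eu0 Ev => /andP[/eqP ? /arc_notQ]; subst w.
by rewrite qsym q0.
Qed.

End Reduction.

Lemma good_subgraph_reduction (V W : finType) (t : rel V) (eF : rel W) alpha
    (f : V -> s2v W) q :
  symmetric t -> symmetric eF -> no_isolated eF -> (forall w, is_leaf eF w -> 0 < alpha w) ->
  spanning_supergraph t (S2vert eF alpha) (S2adj eF alpha) f -> good_subgraph eF q ->
  exists P m, dp_pairing t P m /\ #|P| < #|darts f|.
Proof.
move=> tsym esym noiso apos span [q_sub qsym [x0 [y0 q0]]].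
case=> a [pth [[a_sub a_anti] _ pth_path pth_arcs [deg_Q deg_inner deg_end]]].
exists (reduced_set f q a pth), (reduced_partner f q a); split.
  exact: (reduced_pairing tsym esym noiso apos span q_sub qsym a_sub a_anti
            pth_path pth_arcs deg_Q deg_inner deg_end).
exact: (reduced_card_lt esym span q_sub qsym a_sub deg_Q deg_inner q0).
Qed.

Section Anchoring.
Variables (V : finType) (t : rel V) (P : {set V}).
Hypothesis tsym : symmetric t.
Hypothesis domD : dominating t (~: P).

Definition anchoring (g : {ffun V -> V}) := [forall x in P, (g x \notin P) && t x (g x)].

Definition unanchored (g : {ffun V -> V}) := ~: P :\: g @: P.

Lemma anchoring_exists : exists g, anchoring g.
Proof.
pose g := [ffun x => odflt x [pick d | (d \notin P) && t x d]].
exists g; apply/forall_inP=> x xP; rewrite ffunE; case: pickP => [d //|none].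
have [d dP xd] : exists2 d, d \in ~: P & t x d by apply: domD; rewrite inE negbK.
by have := none d; rewrite -in_setC dP xd.
Qed.

(* If g y is shared, anchoring y at d instead covers one more vertex. *)
Lemma reanchor g d y : anchoring g -> d \notin P -> d \notin g @: P -> y \in P -> t d y ->
  #|[set x in P | g x == g y]| != 1 ->
  exists2 g', anchoring g' & #|unanchored g'| < #|unanchored g|.
Proof.
move=> /forall_inP anch dP dg yP dy c1.
have [x' x'S x'y] : exists2 x', x' \in [set x in P | g x == g y] & x' != y.
  apply/exists_inP; rewrite -negb_forall_in; apply: contra c1 => /forall_inP same.
  apply/cards1P; exists y; apply/setP=> z; rewrite [in RHS]inE.
  by apply/idP/idP => [/same|/eqP->]; rewrite // inE yP eqxx.
move: x'S; rewrite inE => /andP[x'P /eqP gx'].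
pose g' := [ffun x => if x == y then d else g x].
exists g'.
  apply/forall_inP=> x xP; rewrite ffunE; case: eqP => [->|_]; last exact: anch.
  by rewrite dP tsym.
apply: proper_card; apply/properP; split.
  apply/subsetP=> z; rewrite !inE => /andP[zg' zP]; rewrite zP andbT.
  apply: contra zg' => /imsetP[x xP ->]; apply/imsetP.
  case: (eqVneq x y) => [->|nxy].
    by exists x'; rewrite // ffunE (negbTE x'y) gx'.
  by exists x; rewrite // ffunE (negbTE nxy).
exists d; first by rewrite !inE dg.
by rewrite !inE negb_and negbK; apply/orP; left; apply/imsetP; exists y; rewrite ?ffunE ?eqxx.
Qed.

Lemma maximal_anchoring_exists : exists g : V -> V,
  (forall x, x \in P -> g x \notin P /\ t x (g x)) /\
  (forall d y, d \notin P -> d \notin g @: P -> y \in P -> t d y ->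
     #|[set x in P | g x == g y]| = 1).
Proof.
have [g0 g0anch] := anchoring_exists.
case: (arg_minnP (fun g => #|unanchored g|) g0anch) => g anch gmin.
exists g; split=> [x xP|d y dP dg yP dy]; first by apply/andP; move/forall_inP: anch; apply.
apply/eqP; apply: contraT => c1; have [g' anch' lt] := reanchor anch dP dg yP dy c1.
by have := gmin g' anch'; rewrite leqNgt lt.
Qed.

End Anchoring.

Section AnchorForest.
Variables (V : finType) (t : rel V) (P : {set V}) (m g : V -> V).
Hypotheses (tsym : symmetric t) (tirr : irreflexive t) (tacyc : acyclic t).
Hypothesis mP : forall x, x \in P -> [/\ m x \in P, t x (m x) & m (m x) = x].
Hypothesis gP : forall x, x \in P -> g x \notin P /\ t x (g x).

Lemma edge_neq a b : t a b -> (a == b) = false.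
Proof. by apply: contraTF => /eqP->; rewrite tirr. Qed.

Lemma in_notin_neq a b : a \in P -> b \notin P -> (a == b) = false.
Proof. by move=> aP; apply: contraNF => /eqP <-. Qed.

Lemma notin_in_neq a b : a \notin P -> b \in P -> (a == b) = false.
Proof. by rewrite eq_sym; move/[swap]; apply: in_notin_neq. Qed.

(* Otherwise x, m x, g x would be a triangle. *)
Lemma anchor_partner_neq x : x \in P -> g (m x) != g x.
Proof.
move=> xP; apply/eqP=> E.
have [mxP xmx _] := mP xP; have [gxP xgx] := gP xP; have [_ mxg] := gP mxP.
have : uniq [:: x; m x; g x].
  by rewrite /= !inE edge_neq // !in_notin_neq.
move/(@tacyc [:: x; m x; g x] isT); by rewrite /= xmx -E mxg tsym E xgx.
Qed.

(* Otherwise g x1, x1, m x1, g (m x1), m x2, x2 would be a hexagon. *)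
Lemma anchor_pair_inj x1 x2 : x1 \in P -> x2 \in P ->
  g x1 = g x2 -> g (m x1) = g (m x2) -> x1 = x2.
Proof.
move=> x1P x2P e1 e2; apply/eqP; apply: contraT => n12.
have [m1P t1 mm1] := mP x1P; have [m2P t2 mm2] := mP x2P.
have [g1P tg1] := gP x1P; have [gm1P tgm1] := gP m1P.
have [_ tg2] := gP x2P; have [_ tgm2] := gP m2P.
have n1 : (g (m x1) == g x1) = false := negbTE (anchor_partner_neq x1P).
have a1 : (x1 == m x2) = false.
  by apply: contraTF (anchor_partner_neq x2P) => /eqP <-; rewrite e1 eqxx.
have a2 : (m x1 == m x2) = false.
  by apply: contraNF n12 => /eqP E; rewrite -mm1 E mm2.
have a3 : (m x1 == x2) = false.
  by apply: contraTF (anchor_partner_neq x1P) => /eqP ->; rewrite -e1 eqxx.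
have : uniq [:: g x1; x1; m x1; g (m x1); m x2; x2].
  rewrite /= !inE (eq_sym (g x1) (g (m x1))) n1 (edge_neq t1) a1 (negbTE n12) a2 a3.
  rewrite (eq_sym (m x2)) (edge_neq t2).
  by rewrite !(notin_in_neq g1P, notin_in_neq gm1P, in_notin_neq x1P gm1P, in_notin_neq m1P gm1P).
move/(@tacyc [:: g x1; x1; m x1; g (m x1); m x2; x2] isT).
rewrite /= -(tsym x1) tg1 t1 tgm1 e2 -(tsym (m x2)) tgm2.
by rewrite -(tsym x2) t2 e1 tg2.
Qed.

Definition anchor_edge a b := [exists x in P, (g x == a) && (g (m x) == b)].

Section LiftCycle.
Variables (s : seq V) (v0 : V).
Hypotheses (s_uniq : uniq s) (s_size : 2 < size s) (s_cycle : cycle anchor_edge s).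

Let k := size s.
Let succ i := if i.+1 < k then i.+1 else 0.
Let node i := nth v0 s i.

Lemma node_succ_edge i : i < k -> anchor_edge (node i) (node (succ i)).
Proof.
move: s_cycle; rewrite (cycle_path v0) => /(pathP v0) s_path ik.
rewrite /succ; case: ifP => [ik1|ik1]; first by have := s_path i.+1 ik1.
have -> : i = k.-1 by lia.
by have := s_path 0; rewrite /= -nth_last; apply; lia.
Qed.

Definition witness i :=
  odflt v0 [pick x | [&& x \in P, g x == node i & g (m x) == node (succ i)]].

Lemma witnessP i : i < k ->
  [/\ witness i \in P, g (witness i) = node i & g (m (witness i)) = node (succ i)].
Proof.
move=> ik; rewrite /witness; case: pickP => [x /and3P[? /eqP ? /eqP ?] //|none].
have /exists_inP[x xP /andP[gx gmx]] := node_succ_edge ik.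
by have := none x; rewrite xP gx gmx.
Qed.

Lemma node_notin i : i < k -> node i \notin P.
Proof. by case/witnessP=> xP <- _; have [] := gP xP. Qed.

Lemma node_inj i1 i2 : i1 < k -> i2 < k -> node i1 = node i2 -> i1 = i2.
Proof. by move=> h1 h2 /eqP; rewrite nth_uniq // => /eqP. Qed.

Lemma witness_inj i1 i2 : i1 < k -> i2 < k -> witness i1 = witness i2 -> i1 = i2.
Proof.
move=> h1 h2 e; apply: node_inj => //.
by have [_ <- _] := witnessP h1; have [_ <- _] := witnessP h2; rewrite e.
Qed.

(* Two witnesses matched to each other would traverse the cycle forth and back. *)
Lemma witness_partner_neq i1 i2 : i1 < k -> i2 < k -> witness i1 <> m (witness i2).
Proof.
move=> h1 h2 e.
have [w1P g1 gm1] := witnessP h1; have [w2P g2 gm2] := witnessP h2.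
have [_ _ mm] := mP w2P.
have succ_lt i : succ i < k by rewrite /succ; case: ifP; lia.
have e1 : i1 = succ i2 by apply: node_inj; rewrite -?g1 -?gm2 ?e.
have e2 : succ i1 = i2 by apply: node_inj; rewrite -?gm1 -?g2 ?e ?mm.
have k3 : 2 < k := s_size.
by move: e1 e2; rewrite /succ; case: ifP; case: ifP; lia.
Qed.

(* The cycle of t through node i, witness i, m (witness i), node (succ i), ... *)
Definition lift_block i r := if r == 0 then node i else if r == 1 then witness i else m (witness i).

Definition lifted j := lift_block (j %/ 3) (j %% 3).

Lemma liftedE i r : r < 3 -> lifted (i * 3 + r) = lift_block i r.
Proof. by move=> r3; rewrite /lifted; congr lift_block; lia. Qed.

Lemma block_inj i1 r1 i2 r2 : i1 < k -> i2 < k -> r1 < 3 -> r2 < 3 ->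
  lift_block i1 r1 = lift_block i2 r2 -> i1 = i2 /\ r1 = r2.
Proof.
move=> h1 h2; have [w1P _ _] := witnessP h1; have [w2P _ _] := witnessP h2.
have [m1P _ mm1] := mP w1P; have [m2P _ mm2] := mP w2P.
have n1 := node_notin h1; have n2 := node_notin h2.
rewrite /lift_block; case: r1 => [|[|[|//]]]; case: r2 => [|[|[|//]]] _ _ /= E.
- by rewrite (node_inj h1 h2 E).
- by move: n1; rewrite E w2P.
- by move: n1; rewrite E m2P.
- by move: n2; rewrite -E w1P.
- by rewrite (witness_inj h1 h2 E).
- by case: (witness_partner_neq h1 h2 E).
- by move: n2; rewrite -E m1P.
- by case: (witness_partner_neq h2 h1 (esym E)).
- by rewrite (witness_inj h1 h2) // -mm1 -mm2 E.
Qed.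

Lemma lifted_uniq : uniq (mkseq lifted (3 * k)).
Proof.
apply/mkseq_uniqP => j1 j2; rewrite !inE.
have [i1 [r1 [-> r13]]] : exists i r, j1 = i * 3 + r /\ r < 3 by exists (j1 %/ 3), (j1 %% 3); lia.
have [i2 [r2 [-> r23]]] : exists i r, j2 = i * 3 + r /\ r < 3 by exists (j2 %/ 3), (j2 %% 3); lia.
move=> j1k j2k; rewrite !liftedE // => /block_inj; lia.
Qed.

Lemma lifted_step j : j.+1 < 3 * k -> t (lifted j) (lifted j.+1).
Proof.
have [i [r [-> r3]]] : exists i r, j = i * 3 + r /\ r < 3 by exists (j %/ 3), (j %% 3); lia.
move=> jk; have ik : i < k by lia.
have [wP gw gmw] := witnessP ik; have [mwP wmw _] := mP wP.
case: r r3 jk => [|[|[|//]]] _ jk.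
- by rewrite -addnS !liftedE // /lift_block /= -gw tsym; case: (gP wP).
- by rewrite -addnS !liftedE // /lift_block /=.
- have ik1 : i.+1 < k by lia.
  rewrite (_ : (i * 3 + 2).+1 = i.+1 * 3 + 0); last by lia.
  have si : succ i = i.+1 by rewrite /succ ik1.
  by rewrite !liftedE // /lift_block /= -si -gmw; case: (gP mwP).
Qed.

Lemma lifted_wrap : t (lifted (3 * k).-1) (lifted 0).
Proof.
have k1 : k.-1 < k by rewrite /k; lia.
rewrite (_ : (3 * k).-1 = k.-1 * 3 + 2); last by rewrite /k; lia.
rewrite (_ : 0 = 0 * 3 + 0) // !liftedE // /lift_block /=.
have [wP _ gmw] := witnessP k1; have [mwP _ _] := mP wP.
have <- : succ k.-1 = 0 by rewrite /succ prednK ?ltnn //; rewrite /k; lia.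
by rewrite -gmw; case: (gP mwP).
Qed.

Lemma lifted_cycle : cycle t (mkseq lifted (3 * k)).
Proof.
rewrite (cycle_path v0); apply/(pathP v0) => j; rewrite size_mkseq => jk.
case: j jk => [|j] jk /=.
  by rewrite -nth_last size_mkseq !nth_mkseq //; [apply: lifted_wrap | lia].
by rewrite !nth_mkseq //; [apply: lifted_step | lia].
Qed.

End LiftCycle.

Lemma anchor_edge_acyclic : acyclic anchor_edge.
Proof.
case=> [//|v0 s'] s_size s_uniq; apply/negP=> s_cycle.
have := lifted_cycle v0 s_uniq s_size s_cycle; apply/negP/tacyc.
  by rewrite size_mkseq; lia.
exact: lifted_uniq.
Qed.

Hypothesis domP : dominating t P.
Hypothesis g_max : forall d y, d \notin P -> d \notin g @: P -> y \in P -> t d y ->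
  #|[set x in P | g x == g y]| = 1.
Variable x0 : V.
Hypothesis x0P : x0 \in P.

Definition is_anchor d := [exists x in P, g x == d].
Definition load d := #|[set x in P | g x == d]|.
Definition hub d := 1 < load d.
(* A vertex outside P which is not an anchor becomes a leaf copy at the anchor of one of
   its neighbours in P; maximality of g makes this anchor a leaf of the forest. *)
Definition host d := if is_anchor d then d else g (odflt d [pick y | (y \in P) && t d y]).
Definition guests d := [set v | [&& v \notin P, ~~ hub v & host v == d]].

Definition anchor := {d : V | is_anchor d}.

Lemma anchor_of x : x \in P -> is_anchor (g x).
Proof. by move=> xP; apply/exists_inP; exists x. Qed.

(* [to_anchor d] is junk ([g x0]) unless [is_anchor d]. *)
Definition to_anchor d : anchor := insubd (exist _ (g x0) (anchor_of x0P)) d.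

Lemma to_anchorK d : is_anchor d -> val (to_anchor d) = d.
Proof. exact: insubdK. Qed.

Lemma val_anchorK (w : anchor) : to_anchor (val w) = w.
Proof. exact: valKd. Qed.

Lemma to_anchor_inj d1 d2 : is_anchor d1 -> is_anchor d2 -> to_anchor d1 = to_anchor d2 -> d1 = d2.
Proof. by move=> h1 h2 E; rewrite -(to_anchorK h1) -(to_anchorK h2) E. Qed.

Lemma is_anchorP d : reflect (exists2 x, x \in P & g x = d) (is_anchor d).
Proof. by apply: (iffP exists_inP) => -[x xP /eqP]; exists x. Qed.

Lemma anchor_notin d : is_anchor d -> d \notin P.
Proof. by case/is_anchorP=> x xP <-; have [] := gP xP. Qed.

Lemma load_gt0 d : (0 < load d) = is_anchor d.
Proof.
rewrite /load card_gt0; apply/set0Pn/is_anchorP => [[x]|[x xP gx]].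
  by rewrite inE => /andP[xP /eqP]; exists x.
by exists x; rewrite inE xP gx eqxx.
Qed.

Lemma hub_anchor d : hub d -> is_anchor d.
Proof. by rewrite -load_gt0 /hub => /ltnW. Qed.

Definition anchor_forest : rel anchor := fun w1 w2 => anchor_edge (val w1) (val w2).

Definition guest_count (w : anchor) := #|guests (val w)|.

Lemma anchor_forest_deg w : deg anchor_forest w = load (val w).
Proof.
rewrite /deg /load.
have -> : [set y | anchor_forest w y] =
          [set to_anchor (g (m x)) | x in [set x in P | g x == val w]].
  apply/setP=> y; rewrite inE; apply/idP/idP.
    case/exists_inP=> x xP /andP[gx /eqP gmx]; apply/imsetP; exists x.
      by rewrite inE xP gx.
    by rewrite gmx val_anchorK.
  case/imsetP=> x; rewrite inE => /andP[xP gx] ->; apply/exists_inP; exists x => //.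
  by have [mxP _ _] := mP xP; rewrite gx to_anchorK ?eqxx ?anchor_of.
rewrite card_in_imset // => x1 x2; rewrite !inE => /andP[x1P /eqP g1] /andP[x2P /eqP g2] E.
have [m1P _ _] := mP x1P; have [m2P _ _] := mP x2P.
by apply: anchor_pair_inj; rewrite ?g1 ?g2 //; apply: to_anchor_inj E; apply: anchor_of.
Qed.

Lemma anchor_forest_leafE w : is_leaf anchor_forest w <-> ~~ hub (val w).
Proof.
rewrite /is_leaf anchor_forest_deg /hub -leqNgt.
have := valP w; rewrite -load_gt0; split=> [->//|]; lia.
Qed.

Lemma host_spec d : d \notin P -> ~~ hub d ->
  [/\ is_anchor (host d), load (host d) = 1 & exists2 y, y \in P & g y = host d /\ t d y].
Proof.
move=> dP nhub; rewrite /host; case: ifP => [anc | nanc].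
  split=> //; first by move: nhub; rewrite /hub -load_gt0 in anc *; lia.
  by have /is_anchorP[y yP gy] := anc; exists y; rewrite // tsym -gy; case: (gP yP).
case: pickP => [y /andP[yP dy] | none] /=; last first.
  by have [y yP dy] := domP dP; have := none y; rewrite yP dy.
split; [exact: anchor_of | | by exists y].
apply: (g_max dP) => //; apply: contraFN nanc => /imsetP[x xP ->]; exact: anchor_of.
Qed.

Lemma anchor_forest_sym : symmetric anchor_forest.
Proof.
suff sub w1 w2 : anchor_forest w1 w2 -> anchor_forest w2 w1 by move=> ? ?; apply/idP/idP => /sub.
case/exists_inP=> x xP /andP[g1 g2]; have [mxP _ mm] := mP xP.
by apply/exists_inP; exists (m x); rewrite // mm g1 g2.
Qed.

Lemma anchor_forest_is_forest : is_forest anchor_forest.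
Proof.
split; first split.
- exact: anchor_forest_sym.
- move=> w; apply/negbTE/exists_inP=> -[x xP /andP[/eqP g1 /eqP g2]].
  by move: (anchor_partner_neq xP); rewrite g1 g2 eqxx.
- move=> p sp up; rewrite -cycle_map; apply: anchor_edge_acyclic.
    by rewrite size_map.
  by rewrite map_inj_uniq //; apply: val_inj.
Qed.

Lemma anchor_forest_no_isolated : no_isolated anchor_forest.
Proof. by move=> w; rewrite anchor_forest_deg load_gt0; apply: valP. Qed.

Lemma guest_count_pos w : is_leaf anchor_forest w -> 0 < guest_count w.
Proof.
move=> /anchor_forest_leafE nhub; rewrite /guest_count card_gt0; apply/set0Pn.
by exists (val w); rewrite inE anchor_notin ?nhub /host ?(valP w) //=.
Qed.

Definition guest_index v := (index v (enum (guests (host v)))).+1.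

Definition s2_vertex v : s2v anchor :=
  if v \in P then S2Dart (to_anchor (g v)) (to_anchor (g (m v)))
  else if hub v then S2Orig (to_anchor v)
  else S2Copy (to_anchor (host v)) (guest_index v).

Variant s2_vertex_spec v : s2v anchor -> Type :=
  | S2VertexDart of v \in P :
      s2_vertex_spec v (S2Dart (to_anchor (g v)) (to_anchor (g (m v))))
  | S2VertexHub of v \notin P & hub v : s2_vertex_spec v (S2Orig (to_anchor v))
  | S2VertexGuest of v \notin P & ~~ hub v :
      s2_vertex_spec v (S2Copy (to_anchor (host v)) (guest_index v)).

Lemma s2_vertexP v : s2_vertex_spec v (s2_vertex v).
Proof.
rewrite /s2_vertex; case: ifPn => vP; first exact: S2VertexDart.
by case: ifPn => hv; [apply: S2VertexHub | apply: S2VertexGuest].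
Qed.

Lemma s2_vertex_inj : injective s2_vertex.
Proof.
move=> v1 v2; case: (s2_vertexP v1) => [v1P|v1P h1|v1P h1];
  case: (s2_vertexP v2) => [v2P|v2P h2|v2P h2] //.
- case=> /to_anchor_inj e1 /to_anchor_inj e2.
  have [m1P _ _] := mP v1P; have [m2P _ _] := mP v2P.
  by apply: anchor_pair_inj; [| | apply: e1 | apply: e2]; rewrite // anchor_of.
- by case=> /to_anchor_inj; apply; apply: hub_anchor.
- have [c1 _ _] := host_spec v1P h1; have [c2 _ _] := host_spec v2P h2.
  case=> /to_anchor_inj-/(_ c1 c2) e1; rewrite /guest_index e1 => e2.
  have v1G : v1 \in enum (guests (host v2)) by rewrite mem_enum inE v1P h1 e1 /=.
  have v2G : v2 \in enum (guests (host v2)) by rewrite mem_enum inE v2P h2 /=.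
  by rewrite -(nth_index v1 v1G) e2 nth_index.
Qed.

Lemma s2_vertex_vert v : S2vert anchor_forest guest_count (s2_vertex v).
Proof.
case: s2_vertexP => [vP|vP hv|vP hv] /=.
- have [mP' _ _] := mP vP.
  by apply/exists_inP; exists v; rewrite // !to_anchorK ?eqxx ?anchor_of.
- by move/anchor_forest_leafE; rewrite to_anchorK ?hv // hub_anchor.
- have [anc load1 _] := host_spec vP hv.
  split; first by apply/anchor_forest_leafE; rewrite to_anchorK // /hub load1.
  rewrite /guest_count /guest_index to_anchorK // cardE index_mem mem_enum.
  by rewrite inE vP hv eqxx.
Qed.

Lemma s2_vertex_onto z : S2vert anchor_forest guest_count z -> exists v, s2_vertex v = z.
Proof.
case: z => [w|w i|w1 w2] /=.
- move=> nleaf; have hw : hub (val w).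
    by apply/negPn/negP => nhub; apply: nleaf; apply/anchor_forest_leafE.
  exists (val w); rewrite /s2_vertex.
  by rewrite (negbTE (anchor_notin (valP w))) hw val_anchorK.
- case=> /anchor_forest_leafE nhub /andP[i1 ia].
  pose d := nth (val w) (enum (guests (val w))) i.-1.
  have : d \in guests (val w).
    by rewrite -mem_enum mem_nth // -cardE prednK.
  rewrite inE => /and3P[dP nhd /eqP hd]; exists d.
  rewrite /s2_vertex (negbTE dP) (negbTE nhd) /guest_index hd val_anchorK.
  by rewrite index_uniq ?enum_uniq ?prednK // -cardE; apply: ia.
- case/exists_inP=> x xP /andP[/eqP gx /eqP gmx].
  by exists x; rewrite /s2_vertex xP gx gmx !val_anchorK.
Qed.

Lemma load1_uniq d x1 x2 : load d = 1 -> x1 \in P -> x2 \in P -> g x1 = d -> g x2 = d ->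
  x1 = x2.
Proof.
move=> /eqP/cards1P[z Ez] x1P x2P g1 g2.
have : x1 \in [set x in P | g x == d] by rewrite inE x1P g1 eqxx.
have : x2 \in [set x in P | g x == d] by rewrite inE x2P g2 eqxx.
by rewrite Ez !inE => /eqP-> /eqP->.
Qed.

Lemma s2_vertex_edge0 u v : S2edge0 anchor_forest guest_count (s2_vertex u) (s2_vertex v) -> t u v.
Proof.
case: s2_vertexP => [uP|uP hu|uP hu]; case: s2_vertexP => [vP|vP hv|vP hv] //=.
- case=> _ [/to_anchor_inj e1 /to_anchor_inj e2].
  have [muP tu mmu] := mP uP; have [mvP _ _] := mP vP.
  suff -> : v = m u by [].
  apply: anchor_pair_inj => //; first exact: e2 (anchor_of vP) (anchor_of muP).
  by rewrite mmu; apply: e1; apply: anchor_of.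
- case=> _ [_ /to_anchor_inj e]; rewrite tsym -e ?anchor_of ?hub_anchor //.
  by case: (gP vP).
- case=> _ [_ [_ /to_anchor_inj e]]; have [anc load1 [y yP [gy uy]]] := host_spec uP hu.
  by rewrite (load1_uniq load1 vP yP (e (anchor_of vP) anc) gy).
Qed.

Lemma s2_vertex_spanning :
  spanning_supergraph t (S2vert anchor_forest guest_count) (S2adj anchor_forest guest_count)
    s2_vertex.
Proof.
split; [exact: s2_vertex_inj | move=> z | move=> u v [/s2_vertex_edge0 //|]].
  by split=> [/s2_vertex_onto //|[v <-]]; apply: s2_vertex_vert.
by rewrite tsym => /s2_vertex_edge0.
Qed.

Lemma card_s2_darts : #|darts s2_vertex| = #|P|.
Proof. by apply: eq_card => v; rewrite inE; case: s2_vertexP => // /negbTE->. Qed.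

End AnchorForest.

Lemma pairing_s2_forest (V : finType) (t : rel V) P m : is_tree t -> dp_pairing t P m ->
  exists (W : finType) (eF : rel W) (alpha : W -> nat) (f : V -> s2v W),
    [/\ is_forest eF, no_isolated eF, (forall w, is_leaf eF w -> 0 < alpha w),
        spanning_supergraph t (S2vert eF alpha) (S2adj eF alpha) f & #|darts f| = #|P|].
Proof.
case=> [[tsym tirr] [V0 [_ tacyc]]] [domD domP mP].
have [g [gP g_max]] := maximal_anchoring_exists tsym domD.
have [x0 x0P] : exists x, x \in P.
  have [v _] := card_gt0P V0; case: (boolP (v \in P)) => vP; first by exists v.
  by have [y yP _] := domP v vP; exists y.
exists (anchor P g), (@anchor_forest V P m g), (@guest_count V t P g), (s2_vertex t m g x0P).
split.
- exact: anchor_forest_is_forest.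
- exact: (anchor_forest_no_isolated tsym tirr tacyc mP gP x0P).
- exact: (guest_count_pos tsym tirr tacyc mP gP x0P).
- exact: s2_vertex_spanning.
- exact: card_s2_darts.
Qed.

Lemma ex_card_min (T : finType) (U : Type) (Q : {set T} -> U -> Prop) :
  (exists A u, Q A u) -> exists A u, Q A u /\ forall B v, Q B v -> #|A| <= #|B|.
Proof.
case=> A [u QAu].
suff min n : forall (B : {set T}) (v : U), #|B| < n -> Q B v ->
    exists A u, Q A u /\ forall B v, Q B v -> #|A| <= #|B|.
  exact: (min _ A u (ltnSn _) QAu).
elim: n => [//|n IH] B v Bn QBv.
case: (classic (exists C w, Q C w /\ #|C| < #|B|)) => [[C [w [QCw CB]]]|nosmaller].
  by apply: (IH C w) => //; lia.
exists B, v; split=> // C w QCw; rewrite leqNgt; apply/negP=> CB.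
by apply: nosmaller; exists C, w.
Qed.

Unset Implicit Arguments.

Theorem proposition7p1 (V : finType) (t : rel V) (Htree : is_tree t) :
  DPDP t <->
  exists (W : finType) (eF : rel W) (alpha : W -> nat) (f : V -> s2v W),
    [/\ is_forest eF, no_isolated eF, ~ has_good_subgraph eF,
        (forall w, is_leaf eF w -> 0 < alpha w) &
        spanning_supergraph t (S2vert eF alpha) (S2adj eF alpha) f].
Proof.
have tS : simple_graph t by case: Htree.
split=> [/(DPDP_pairingP tS)/ex_card_min[P [m [Hpm P_min]]] | ].
  have [W [eF [alpha [f [forest noiso apos span cardE]]]]] := pairing_s2_forest Htree Hpm.
  exists W, eF, alpha, f; split=> // -[q good].
  have [P' [m' [H' lt]]] := good_subgraph_reduction tS.1 forest.1.1 noiso apos span good.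
  by have := P_min _ _ H'; rewrite leqNgt -cardE lt.
case=> W [eF [alpha [f [[[esym _] _] noiso _ apos span]]]].
apply/(DPDP_pairingP tS); exists (darts f), (dart_partner f).
exact: darts_pairing span tS.1 esym noiso apos.
Qed.
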